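(* Let $r\geqslant 3$ be an odd integer and let $\Gamma\cong\mathbb{Z}_{4r}\oplus\mathbb{Z}_4$. Then there exists an $\mathrm{MRS}_\Gamma(r,8;2)$ in which every row sum and every column sum equals $0_\Gamma$.
   Context: For an abelian group $\Gamma$ of order $abc$, an $\mathrm{MRS}_\Gamma(a,b;c)$ is a collection of $c$ arrays of size $a\times b$ whose entries are the elements of $\Gamma$, each appearing exactly once and in a unique array, such that there are $\omega,\delta\in\Gamma$ with every row sum (in every array) equal to $\omega$ and every column sum (in every array) equal to $\delta$. *)

From HB Require Import structures.
From mathcomp Require Import all_boot all_order all_algebra.
Set Implicit Arguments. Unset Strict Implicit. Unset Printing Implicit Defensive.
Import GRing.Theory.
Local Open Scope ring_scope.

Definition is_MRS (G : zmodType) (a b c : nat) (A : 'I_c -> 'M[G]_(a, b))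
    (omega delta : G) : Prop :=
  [/\ bijective (fun t : 'I_c * 'I_a * 'I_b => A t.1.1 t.1.2 t.2),
      (forall (k : 'I_c) (i : 'I_a), \sum_(j < b) A k i j = omega) &
      (forall (k : 'I_c) (j : 'I_b), \sum_(i < a) A k i j = delta)].

From HB Require Import structures.
From mathcomp Require Import all_boot all_order all_algebra.
From mathcomp Require Import zify.
Set Implicit Arguments. Unset Strict Implicit. Unset Printing Implicit Defensive.
Import GRing.Theory Num.Theory.
Local Open Scope ring_scope.

(* As r is odd, (u, a, b) |-> (4u + ra, b) maps Z^3 onto Z_(4r) x Z_4 with kernel
   rZ x 4Z x 4Z, so an entry can be chosen as an integer triple (u, a, b) with
   |u| <= (r-1)/2, a complete set of residues mod r.  A row or column then sums to 0
   as soon as its triples sum to a "balanced" triple (0, 0 mod 4, 0 mod 4).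
   The first three rows of the two arrays form an explicit block that uses every
   (a, b) in Z_4^2 once with each of u = -1, 0, 1.  The remaining rows come in pairs
   x, -x with x_j = ((-1)^j m, 2k + j/4, j mod 4) for m = 2, ..., (r-1)/2: each pair
   cancels in every column, each row is balanced, and across the two arrays the
   pairs (a, b) attached to u = m (and to u = -m) run through Z_4^2 exactly once. *)

Lemma Zp_intr_eq0 p (z : int) : (1 < p)%N -> ((z%:~R : 'Z_p) == 0) = (p%:Z %| z)%Z.
Proof.
move=> p_gt1; have Zp_natr_eq0 m : ((m%:R : 'Z_p) == 0) = (p %| m)%N.
  by rewrite -(inj_eq val_inj) /= val_Zp_nat.
by case: z => m; rewrite ?NegzE ?mulrNz ?oppr_eq0 ?dvdzN -pmulrn Zp_natr_eq0.
Qed.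

Lemma coprimez_dvdz_mulD (m n x y : int) : coprimez m n ->
  (m * n %| m * x + n * y)%Z = (n %| x)%Z && (m %| y)%Z.
Proof.
move=> co_mn; rewrite Gauss_dvdz // (rpredDl _ (dvdz_mulr x (dvdzz m))).
rewrite (rpredDr _ (dvdz_mulr y (dvdzz n))).
by rewrite andbC !Gauss_dvdzr // coprimez_sym.
Qed.

Lemma dvdz_norm_lt_eq0 (d m : int) : (d %| m)%Z -> `|m| < `|d| -> m = 0.
Proof.
move=> /dvdzP[q ->]; have [-> | q_neq0] := eqVneq q 0; first by rewrite mul0r.
have q_ge1 : 1 <= `|q| by lia.
by rewrite normrM; nia.
Qed.

Lemma sum_pairs_cancel (V : zmodType) (F : nat -> V) m n :
  (forall t, F (m + t.*2)%N + F (m + t.*2).+1 = 0) ->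
  \sum_(i < m + n.*2) F i = \sum_(i < m) F i.
Proof.
move=> F_pair0; elim: n => [|n IHn]; first by rewrite addn0.
by rewrite doubleS !addnS !big_ord_recr /= -addrA F_pair0 addr0.
Qed.

Lemma sum_iota_foldr (V : nmodType) n (F : nat -> V) :
  \sum_(i < n) F i = foldr +%R 0 (map F (iota 0 n)).
Proof. by rewrite -(big_mkord xpredT) /index_iota subn0 foldrE big_map. Qed.

Lemma all_iotaP n (P : pred nat) :
  reflect (forall i, (i < n)%N -> P i) (all P (iota 0 n)).
Proof.
apply: (iffP allP) => P_lt i; last by rewrite mem_iota => /P_lt.
by move=> lt_in; apply: P_lt; rewrite mem_iota.
Qed.

Definition grid (n1 n2 n3 : nat) : seq (nat * nat * nat) :=
  [seq (ab, c) | ab <- [seq (a, b) | a <- iota 0 n1, b <- iota 0 n2], c <- iota 0 n3].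

Lemma mem_grid n1 n2 n3 a b c :
  (a < n1)%N -> (b < n2)%N -> (c < n3)%N -> (a, b, c) \in grid n1 n2 n3.
Proof. by move=> lt_a lt_b lt_c; rewrite !allpairs_f ?mem_iota. Qed.

Definition balanced : pred (int * int * int) :=
  [pred x | [&& x.1.1 == 0, (4 %| x.1.2)%Z & (4 %| x.2)%Z]].

Fact balanced_zmod_closed : zmod_closed balanced.
Proof.
split=> [|x y /and3P[/eqP x1 x2 x3] /and3P[/eqP y1 y2 y3]]; first by rewrite inE /= !dvdz0.
by rewrite inE /= x1 y1 subrr eqxx !rpredB.
Qed.

HB.instance Definition _ :=
  GRing.isZmodClosed.Build (int * int * int)%type balanced balanced_zmod_closed.

Lemma grid_incongruent n1 n2 n3 (F : nat -> nat -> nat -> int * int * int) :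
  all2rel (fun x y => (F x.1.1 x.1.2 x.2 - F y.1.1 y.1.2 y.2 \in balanced) ==> (x == y))
    (grid n1 n2 n3) ->
  forall a b c a' b' c', (a < n1)%N -> (b < n2)%N -> (c < n3)%N ->
    (a' < n1)%N -> (b' < n2)%N -> (c' < n3)%N ->
  F a b c - F a' b' c' \in balanced -> [/\ a = a', b = b' & c = c'].
Proof.
move=> /allrelP F_inj a b c a' b' c' lt_a lt_b lt_c lt_a' lt_b' lt_c'.
have /implyP eq_abc := F_inj _ _ (mem_grid lt_a lt_b lt_c) (mem_grid lt_a' lt_b' lt_c').
by move=> /eq_abc/eqP[-> -> ->].
Qed.

Section Encoding.

Variable r : nat.
Hypothesis r_odd : odd r.

Definition enc (x : int * int * int) : 'Z_(4 * r) * 'Z_4 :=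
  ((4 * x.1.1 + r%:Z * x.1.2)%:~R, x.2%:~R).

Lemma enc_is_zmod_morphism : zmod_morphism enc.
Proof.
move=> x y; rewrite /enc /=; congr (_, _); last by rewrite intrB.
by rewrite -intrB mulrBr mulrBr opprD addrACA.
Qed.

HB.instance Definition _ :=
  GRing.isZmodMorphism.Build (int * int * int)%type ('Z_(4 * r) * 'Z_4)%type enc
    enc_is_zmod_morphism.

Lemma enc_eq0 x :
  (enc x == 0) = [&& (r%:Z %| x.1.1)%Z, (4 %| x.1.2)%Z & (4 %| x.2)%Z].
Proof.
have r4_gt1 : (1 < 4 * r)%N by case: r r_odd => //= r' _; lia.
have co4r : coprimez 4 r%:Z.
  by rewrite coprimezE; change (coprime (2 ^ 2) r); rewrite coprime_pexpl // coprime2n.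
rewrite /enc xpair_eqE !Zp_intr_eq0 // PoszM -[4%:Z]/(4 : int).
by rewrite coprimez_dvdz_mulD // andbA.
Qed.

Lemma enc_balanced x : x \in balanced -> enc x = 0.
Proof. by case/and3P=> /eqP x1 x2 x3; apply/eqP; rewrite enc_eq0 x1 dvdz0 x2 x3. Qed.

Lemma eq_enc_balanced (x y : int * int * int) : `|x.1.1| * 2 < r%:Z -> `|y.1.1| * 2 < r%:Z ->
  enc x = enc y -> x - y \in balanced.
Proof.
move=> x_small y_small /eqP; rewrite -subr_eq0 -raddfB enc_eq0 /= => /and3P[dv_u dv_a dv_b].
rewrite inE /= dv_a dv_b !andbT; apply/eqP/(dvdz_norm_lt_eq0 dv_u); lia.
Qed.

End Encoding.

(* Array k, row i, column j is at position 24k + 8i + j.  Each column has u-parts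
   -1, 0, 1 and (a, b)-parts h, s h, s^2 h for s (a, b) = (b, -a-b), whose sum is 0. *)
Definition base_block : seq (int * int * int) := [::
   ( 0, 0, 0); ( 0, 0, 1); ( 0, 0, 2); ( 0, 0, 3); ( 1, 0, 3); (-1, 2, 1); ( 1, 2, 1); (-1, 0, 1);
   ( 1, 0, 0); (-1, 3, 0); ( 1, 2, 2); (-1, 1, 0); ( 0, 1, 0); ( 0, 1, 1); (-1, 1, 1); ( 1, 3, 0);
   (-1, 0, 0); ( 1, 1, 3); (-1, 2, 0); ( 1, 3, 1); (-1, 3, 1); ( 1, 1, 2); ( 0, 1, 2); ( 0, 1, 3);

   ( 0, 2, 0); ( 0, 2, 1); ( 0, 2, 2); (-1, 3, 2); ( 1, 0, 1); ( 1, 1, 0); (-1, 3, 3); ( 0, 3, 3);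
   ( 1, 0, 2); ( 1, 1, 1); (-1, 0, 2); ( 1, 3, 3); ( 0, 3, 0); (-1, 0, 3); ( 0, 3, 2); (-1, 2, 3);
   (-1, 2, 2); (-1, 1, 2); ( 1, 2, 0); ( 0, 2, 3); (-1, 1, 3); ( 0, 3, 1); ( 1, 2, 3); ( 1, 3, 2)].

Definition base_entry (k i j : nat) : int * int * int := nth 0 base_block (24 * k + 8 * i + j).

Lemma base_rows_balanced k i :
  (k < 2)%N -> (i < 3)%N -> \sum_(j < 8) base_entry k i j \in balanced.
Proof.
move=> lt_k2 lt_i3; rewrite sum_iota_foldr.
have /all_iotaP/(_ k lt_k2)/all_iotaP/(_ i lt_i3) // : all (fun k => all (fun i =>
    foldr +%R 0 [seq base_entry k i j | j <- iota 0 8] \in balanced) (iota 0 3)) (iota 0 2).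
by vm_compute.
Qed.

Lemma base_cols_balanced k j :
  (k < 2)%N -> (j < 8)%N -> \sum_(i < 3) base_entry k i j \in balanced.
Proof.
move=> lt_k2 lt_j8; rewrite (sum_iota_foldr _ (base_entry k ^~ j)).
have /all_iotaP/(_ k lt_k2)/all_iotaP/(_ j lt_j8) // : all (fun k => all (fun j =>
    foldr +%R 0 [seq base_entry k i j | i <- iota 0 3] \in balanced) (iota 0 8)) (iota 0 2).
by vm_compute.
Qed.

Lemma base_entry_small k i j : (k < 2)%N -> (i < 3)%N -> (j < 8)%N ->
  `|(base_entry k i j).1.1| <= 1.
Proof.
move=> lt_k2 lt_i3 lt_j8; have /allP/(_ _ (mem_grid lt_k2 lt_i3 lt_j8)) // :
  all (fun x => `|(base_entry x.1.1 x.1.2 x.2).1.1| <= 1) (grid 2 3 8) by vm_compute.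
Qed.

Lemma base_entry_incongruent k i j k' i' j' :
  (k < 2)%N -> (i < 3)%N -> (j < 8)%N -> (k' < 2)%N -> (i' < 3)%N -> (j' < 8)%N ->
  base_entry k i j - base_entry k' i' j' \in balanced -> [/\ k = k', i = i' & j = j'].
Proof. by apply: grid_incongruent; vm_compute. Qed.

Definition tail_unit (k : nat) (p : bool) (j : nat) : int * int * int :=
  let x := ((-1) ^+ j, (2 * k + j %/ 4)%N%:Z, (j %% 4)%N%:Z) in if p then x else - x.

Definition tail_entry (k i j : nat) : int * int * int :=
  let x := tail_unit k (odd i) j in (x.1.1 * (uphalf i)%:Z, x.1.2, x.2).

Lemma tail_row_balanced k i : \sum_(j < 8) tail_entry k i j \in balanced.
Proof.
rewrite /tail_entry /tail_unit; case: (odd i);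
  by rewrite !big_ord_recr big_ord0 /= inE /= !exprS expr0; lia.
Qed.

Lemma tail_pair_cancel k i j : odd i -> tail_entry k i j + tail_entry k i.+1 j = 0.
Proof.
move=> odd_i; have uphalfS : uphalf i.+1 = uphalf i by lia.
by rewrite /tail_entry /tail_unit uphalfS /= odd_i /= mulNr !subrr.
Qed.

Lemma tail_unit_norm k p j : `|(tail_unit k p j).1.1| = 1.
Proof. by rewrite /tail_unit; case: p; rewrite /= ?normrN normrX normrN1 expr1n. Qed.

Lemma tail_entry_norm k i j : `|(tail_entry k i j).1.1| = (uphalf i)%:Z.
Proof. by rewrite normrM tail_unit_norm mul1r. Qed.

Lemma tail_entry_incongruent k i j k' i' j' :
  (k < 2)%N -> (j < 8)%N -> (k' < 2)%N -> (j' < 8)%N -> (0 < i)%N -> (0 < i')%N ->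
  tail_entry k i j - tail_entry k' i' j' \in balanced -> [/\ k = k', i = i' & j = j'].
Proof.
move=> lt_k2 lt_j8 lt_k'2 lt_j'8 i_gt0 i'_gt0 bal.
have eq_u : (tail_entry k i j).1.1 = (tail_entry k' i' j').1.1.
  by case/and3P: bal => /eqP /= /subr0_eq.
have eq_m : uphalf i = uphalf i'.
  by apply/eqP; rewrite -eqz_nat -(tail_entry_norm k i j) eq_u tail_entry_norm.
have unit_bal : tail_unit k (odd i) j - tail_unit k' (odd i') j' \in balanced.
  have m_neq0 : (uphalf i')%:Z != 0 by lia.
  move: bal eq_u; rewrite /tail_entry eq_m => /and3P[_ dv_a dv_b] /(mulIf m_neq0) eq_u.
  by rewrite inE /= eq_u subrr eqxx dv_a dv_b.
have lt_p2 (b : bool) : (b < 2)%N by case: b.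
have [||-> eq_p ->] := @grid_incongruent 2 2 8 (fun k p j => tail_unit k (odd p) j)
  _ k (odd i) j k' (odd i') j' lt_k2 (lt_p2 _) lt_j8 lt_k'2 (lt_p2 _) lt_j'8.
- by vm_compute.
- by rewrite /= !oddb.
by split=> //; lia.
Qed.

Definition entry (k i j : nat) : int * int * int :=
  if (i < 3)%N then base_entry k i j else tail_entry k i j.

Lemma entry_base k i j : (i < 3)%N -> entry k i j = base_entry k i j.
Proof. by rewrite /entry => ->. Qed.

Lemma entry_tail k i j : (3 <= i)%N -> entry k i j = tail_entry k i j.
Proof. by rewrite /entry leqNgt => /negbTE ->. Qed.

Lemma entry_row_balanced k i : (k < 2)%N -> \sum_(j < 8) entry k i j \in balanced.
Proof.
move=> lt_k2; case: (ltnP i 3) => [lt_i3 | ge_i3].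
  by under eq_bigr do rewrite entry_base //; exact: base_rows_balanced.
by under eq_bigr do rewrite entry_tail //; exact: tail_row_balanced.
Qed.

Lemma entry_col_balanced r k j : odd r -> (3 <= r)%N -> (k < 2)%N -> (j < 8)%N ->
  \sum_(i < r) entry k i j \in balanced.
Proof.
move=> r_odd r_ge3 lt_k2 lt_j8; have [n ->] : exists n, r = (3 + n.*2)%N.
  by exists (r./2.-1); lia.
rewrite (sum_pairs_cancel (F := entry k ^~ j)) => [|t].
  by under eq_bigr => i _ do rewrite entry_base //; exact: base_cols_balanced.
by rewrite !entry_tail ?tail_pair_cancel //; lia.
Qed.

Lemma entry_small r k i j : odd r -> (3 <= r)%N -> (k < 2)%N -> (i < r)%N -> (j < 8)%N ->
  `|(entry k i j).1.1| * 2 < r%:Z.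
Proof.
move=> r_odd r_ge3 lt_k2 lt_ir lt_j8; case: (ltnP i 3) => [lt_i3 | ge_i3].
  by rewrite entry_base //; have := base_entry_small lt_k2 lt_i3 lt_j8; lia.
by rewrite entry_tail // tail_entry_norm; lia.
Qed.

Lemma entry_incongruent k i j k' i' j' :
  (k < 2)%N -> (j < 8)%N -> (k' < 2)%N -> (j' < 8)%N ->
  entry k i j - entry k' i' j' \in balanced -> [/\ k = k', i = i' & j = j'].
Proof.
move=> lt_k2 lt_j8 lt_k'2 lt_j'8 bal.
have eq_u : (entry k i j).1.1 = (entry k' i' j').1.1.
  by case/and3P: bal => /eqP /= /subr0_eq.
case: (ltnP i 3) => [lt_i3 | ge_i3]; case: (ltnP i' 3) => [lt_i'3 | ge_i'3].
- by move: bal; rewrite !entry_base //; apply: base_entry_incongruent.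
- have := base_entry_small lt_k2 lt_i3 lt_j8.
  by rewrite -entry_base // eq_u entry_tail // tail_entry_norm; lia.
- have := base_entry_small lt_k'2 lt_i'3 lt_j'8.
  by rewrite -entry_base // -eq_u entry_tail // tail_entry_norm; lia.
by move: bal; rewrite !entry_tail //; apply: tail_entry_incongruent => //; lia.
Qed.

Theorem lemma4p7 (r : nat) (hr3 : (3 <= r)%N) (hrodd : odd r) :
  exists A : 'I_2 -> 'M[('Z_(4 * r) * 'Z_4)%type]_(r, 8),
    is_MRS A 0 0.
Proof.
exists (fun k => \matrix_(i < r, j < 8) enc r (entry k i j)); split.
- apply: inj_card_bij => [[[k i] j] [[k' i'] j']|]; last first.
    by rewrite !card_prod !card_ord !Zp_cast //; lia.
  rewrite /= !mxE => eq_enc.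
  have small k i j := entry_small hrodd hr3 (ltn_ord k) (ltn_ord i) (ltn_ord j).
  have := eq_enc_balanced hrodd (small k i j) (small k' i' j') eq_enc.
  by case/entry_incongruent => // /val_inj-> /val_inj-> /val_inj->.
- move=> k i; under eq_bigr do rewrite mxE.
  by rewrite -raddf_sum; apply/enc_balanced/entry_row_balanced.
- move=> k j; under eq_bigr do rewrite mxE.
  by rewrite -raddf_sum; apply/enc_balanced/entry_col_balanced.
Qed.
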